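(* (a) $crx_1(K_n)=crx_2(K_n)=3$ for every $n\ge 3$. (b) For every $k\ge 3$ there exists $N=N(k)$ such that $crx_k(K_n)=2k-1$ for all $n\ge N$.
   Context: $K_n$ is the complete graph on $n$ vertices. An edge-coloured cycle is rainbow if its edges have distinct colours. For a graph $G$ in which any $k$ vertices lie on a common cycle, $crx_k(G)$ is the minimum number of colours in an edge-colouring of $G$ such that every set of $k$ vertices of $G$ lies in some rainbow cycle. *)

From mathcomp Require Import all_boot.
Set Implicit Arguments. Unset Strict Implicit. Unset Printing Implicit Defensive.

(* An edge-colouring of K_n with
   (at most) m colours is a symmetric map c : 'I_n -> 'I_n -> 'I_m; the
   colour of edge {u,v} (u != v) is c u v (values on the diagonal are
   irrelevant). *)
Definition sym_colouring (n m : nat) (c : 'I_n -> 'I_n -> 'I_m) : Prop :=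
  forall u v, c u v = c v u.

(* A cycle of K_n: a duplicate-free cyclic sequence of at least 3 vertices;
   its edges are the consecutive pairs (s_i, s_{i+1}) and (last, first). *)
Definition is_cycle (n : nat) (s : seq 'I_n) : bool :=
  uniq s && (3 <= size s).

Definition cycle_colours (n m : nat) (c : 'I_n -> 'I_n -> 'I_m) (s : seq 'I_n)
  : seq 'I_m := [seq c p.1 p.2 | p <- zip s (rot 1 s)].

Definition rainbow_cycle (n m : nat) (c : 'I_n -> 'I_n -> 'I_m) (s : seq 'I_n)
  : bool := is_cycle s && uniq (cycle_colours c s).

Definition k_rainbow_cycle_colouring (n k m : nat)
  (c : 'I_n -> 'I_n -> 'I_m) : Prop :=
  forall S : {set 'I_n}, #|S| = k ->
    exists s : seq 'I_n, @rainbow_cycle n m c s && (S \subset [set x in s]).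

Definition crx_colourable (n k m : nat) : Prop :=
  exists c : 'I_n -> 'I_n -> 'I_m,
    @sym_colouring n m c /\ @k_rainbow_cycle_colouring n k m c.

Definition crx_Kn_eq (k n m : nat) : Prop :=
  crx_colourable n k m /\ forall m', m' < m -> ~ crx_colourable n k m'.

From mathcomp Require Import all_boot ring zify.
Set Implicit Arguments. Unset Strict Implicit. Unset Printing Implicit Defensive.

(* A rainbow cycle has at least three edges.  If k of its vertices span a
   monochromatic clique, then at most one of its edges joins two of them, so it
   has at least 2k - 1 edges; and by Ramsey's theorem every colouring of a large
   K_n with fewer than 2k - 1 colours has a monochromatic k-clique.

   For k <= 2, three colours suffice: there is a 3-colouring of K_n in which every
   edge lies on a rainbow triangle.  For k >= 2 and q = 2k - 1, colour uv by
   f(u + v), where f(z) is the sum mod q of the digits of z in bases q and q + 1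
   just above the lowest nonzero digit.  For every shift d and all colours a, b
   the set of z with f(z) = a and f(z + d) = b contains a whole residue class
   modulo some P with P (2k + 1) <= n (use the base whose power in d is small),
   so any two vertices have more than 2k common neighbours joined to them by
   prescribed colours.  A rainbow cycle through a k-set S is then obtained by
   inserting such a fresh vertex between consecutive vertices of S. *)

(** * Rainbow cycles *)

Lemma zip_rcons_neq (T : eqType) (x z : T) p : uniq (x :: p) -> last x p != z ->
  {in zip (x :: p) (rcons p z), forall e : T * T, e.1 != e.2}.
Proof.
elim: p x => [|y p IH] x /=; first by move=> _ xz e; rewrite inE => /eqP ->.
rewrite inE negb_or => /andP [/andP [xy _] yp] lz e; rewrite inE.
by case/orP => [/eqP -> //|]; apply: IH.
Qed.

Lemma cycle_edges_neq (T : eqType) (s : seq T) : uniq s -> 1 < size s ->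
  {in zip s (rot 1 s), forall e : T * T, e.1 != e.2}.
Proof.
case: s => // x [//|y p] xp _; rewrite rot1_cons; apply: zip_rcons_neq => //=.
by case/andP: xp => xp _; apply: contraNneq xp => <-; apply: mem_last.
Qed.

Lemma count_mem_subset (T : finType) (S : {set T}) (s : seq T) :
  uniq s -> S \subset [set x in s] -> count (mem S) s = #|S|.
Proof.
move=> us /subsetP Ss; rewrite -size_filter -(card_uniqP _) ?filter_uniq //.
by apply: eq_card => x; rewrite mem_filter; apply/andb_idr => /Ss; rewrite inE.
Qed.

Lemma uniq_size_ord m (s : seq 'I_m) : uniq s -> size s <= m.
Proof. by move/card_uniqP <-; apply: leq_trans (max_card _) _; rewrite card_ord. Qed.

Section Cycles.
Variables (n m : nat) (c : 'I_n -> 'I_n -> 'I_m).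

Lemma size_cycle_colours s : size (cycle_colours c s) = size s.
Proof. by rewrite size_map size_zip size_rot minnn. Qed.

Lemma rainbow_cycle_size s : rainbow_cycle c s -> 3 <= size s <= m.
Proof.
by case/andP => /andP [_ ->] /uniq_size_ord; rewrite size_cycle_colours.
Qed.

Lemma rainbow_cycle_monochromatic (S : {set 'I_n}) (j : 'I_m) s :
  {in S &, forall u v, u != v -> c u v = j} -> rainbow_cycle c s ->
  S \subset [set x in s] -> #|S|.*2 <= m.+1.
Proof.
move=> mono rs Ss; have /andP [sz3 sm] := rainbow_cycle_size rs.
case/andP: rs => /andP [us _] uc.
set es := zip s (rot 1 s).
have size_es : size es = size s by rewrite size_zip size_rot minnn.
have cS := count_mem_subset us Ss.
have c1 : count (preim fst (mem S)) es = #|S|.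
  by rewrite -(count_map fst) -/(unzip1 _) unzip1_zip ?size_rot.
have c2 : count (preim snd (mem S)) es = #|S|.
  rewrite -(count_map snd) -/(unzip2 _) unzip2_zip ?size_rot // -cS.
  by apply/permP; rewrite perm_rot.
have cI : count (predI (preim fst (mem S)) (preim snd (mem S))) es <= 1.
  apply: leq_trans (_ : count_mem j (cycle_colours c s) <= 1); last first.
    by rewrite count_uniq_mem ?leq_b1.
  rewrite /cycle_colours count_map -/es.
  rewrite (eq_in_count (a2 := predI (predI (preim fst (mem S)) (preim snd (mem S)))
                                    (preim (fun e => c e.1 e.2) (pred1 j)))).
    by apply: sub_count => e /andP [].
  move=> e ee /=; case: andP => //= [[e1 e2]].
  by rewrite mono ?eqxx // (cycle_edges_neq us) ?(leq_trans _ sz3).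
have := count_predUI (preim fst (mem S)) (preim snd (mem S)) es.
rewrite c1 c2 addnn => <-.
by rewrite -addn1 leq_add // (leq_trans (count_size _ _)) // size_es.
Qed.

End Cycles.

(** * Ramsey's theorem and the lower bounds *)

Lemma pigeonhole_count (T : Type) m b (f : T -> 'I_m) (s : seq T) :
  m * b < size s -> exists j, b < count (fun x => f x == j) s.
Proof.
move=> mbs; case: (pickP (fun j => b < count (fun x => f x == j) s)) => [j ? | small].
  by exists j.
move: mbs; rewrite ltnNge => /negP []; rewrite -sum1_size (partition_big f xpredT) //=.
rewrite -[m in m * b]card_ord -sum_nat_const leq_sum // => j _.
by rewrite sum1_count leqNgt small.
Qed.

Definition ramsey_bound m k := m.+1 ^ (m * k).+1.

Lemma ramsey_bound_mono k m m' : m <= m' -> ramsey_bound m k <= ramsey_bound m' k.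
Proof.
move=> mm'; apply: (@leq_trans (m'.+1 ^ (m * k).+1)); first by rewrite leq_exp2r.
by rewrite leq_pexp2l // ltnS leq_mul2r mm' orbT.
Qed.

Section Ramsey.
Variables (n m : nat) (c : 'I_n -> 'I_n -> 'I_m).
Hypotheses (c_sym : sym_colouring c) (m_gt0 : 0 < m).

(* Along a pairwise [colour_led] sequence, p.2 is the colour of every edge from
   p.1 to a later vertex. *)
Definition colour_led (p p' : 'I_n * 'I_m) := c p.1 p'.1 == p.2.

Lemma colour_led_seq t (A : seq 'I_n) : uniq A -> m.+1 ^ t <= size A ->
  exists ps : seq ('I_n * 'I_m),
    [/\ size ps = t, uniq (unzip1 ps), {subset unzip1 ps <= A} & pairwise colour_led ps].
Proof.
elim: t A => [|t IH] A; first by exists [::].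
case: A => [|v A]; first by rewrite leqn0 expn_eq0.
rewrite cons_uniq => /andP [vA uA] hA.
have [j hj] : exists j, (m.+1 ^ t).-1 < count (fun w => c v w == j) A.
  apply: pigeonhole_count; have X0 : 0 < m.+1 ^ t by rewrite expn_gt0.
  move: hA; rewrite expnS mulSn /= -subn1 mulnBr muln1.
  move: (m.+1 ^ t) X0 => X X0; have := leq_pmulr m X0; move: (m * X) => Y; lia.
have [|ps [sps ups sub pps]] := IH (filter (fun w => c v w == j) A) (filter_uniq _ uA).
  by rewrite size_filter; move: hj; rewrite prednK // expn_gt0.
exists ((v, j) :: ps); split => /=.
- by rewrite sps.
- by rewrite ups andbT; apply: contra vA => /sub; rewrite mem_filter => /andP [].
- move=> w; rewrite inE => /orP [/eqP ->|/sub]; first exact: mem_head.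
  by rewrite mem_filter inE => /andP [_ ->]; rewrite orbT.
- rewrite pps andbT; apply/allP => p pin.
  by have := sub p.1 (map_f fst pin); rewrite mem_filter => /andP [].
Qed.

Lemma ramsey k : ramsey_bound m k <= n ->
  exists2 S : {set 'I_n}, #|S| = k & exists j, {in S &, forall u v, u != v -> c u v = j}.
Proof.
move=> hn.
have [|ps [sps ups _ pps]] := @colour_led_seq (m * k).+1 (enum 'I_n) (enum_uniq _).
  by rewrite size_enum_ord.
have [|j hj] := @pigeonhole_count _ _ k snd ps; first by rewrite sps.
pose psj := filter (fun p => p.2 == j) ps.
pose ws := take k (unzip1 psj).
have uws : uniq ws.
  by rewrite take_uniq // (subseq_uniq _ ups) // map_subseq // filter_subseq.
exists [set x in ws].
  by rewrite cardsE (card_uniqP uws) size_takel // size_map size_filter ltnW.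
exists j.
have : all2rel (fun u v => (u == v) || (c u v == j)) ws.
  rewrite -pairwise_all2rel => [|u|u v]; last by rewrite eq_sym c_sym.
  - apply: subseq_pairwise (take_subseq _ _) _; rewrite pairwise_map.
    have psj_led : pairwise colour_led psj := pairwise_filter _ pps.
    apply: (@sub_in_pairwise _ (fun p => p.2 == j)) (filter_all _ _) psj_led.
    by move=> p p' /eqP pj _ /=; rewrite /colour_led pj => ->; rewrite orbT.
  - by rewrite eqxx.
move/allrelP => mono u v; rewrite !inE => u_ws v_ws uv.
by have := mono u v u_ws v_ws; rewrite (negbTE uv) => /eqP.
Qed.

End Ramsey.

Lemma crx_colourable_ge3 n k m : crx_colourable n k m -> 0 < k <= n -> 2 < m.
Proof.
case=> c [_ ck] /andP [k0 kn].
have : 0 < #|[set S : {set 'I_n} | #|S| == k]| by rewrite card_draws card_ord bin_gt0.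
case/card_gt0P => S; rewrite inE => /eqP /ck [s /andP [rs _]].
by case/andP: (rainbow_cycle_size rs) => /leq_trans; apply.
Qed.

Lemma crx_colourable_lower n k m : ramsey_bound m k <= n -> crx_colourable n k m ->
  k.*2 <= m.+1.
Proof.
move=> hn [c [c_sym ck]]; have [m0|m_gt0] := posnP m.
  have n0 : 0 < n by apply: leq_trans hn; rewrite expn_gt0.
  by move: (c (Ordinal n0) (Ordinal n0)); rewrite m0 => -[].
have [S cS [j mono]] := ramsey c_sym m_gt0 hn.
have [s /andP [rs Ss]] := ck S cS.
by rewrite -cS; apply: rainbow_cycle_monochromatic mono rs Ss.
Qed.

(** * Three colours for k <= 2 *)

(* The three perfect matchings of K_4 on {0, 1, 2, 3}, one colour each. *)
Definition k4_colour i j := if i + j == 3 then 2 else if odd (i + j) then 0 else 1.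

Lemma k4_colourC i j : k4_colour i j = k4_colour j i.
Proof. by rewrite /k4_colour addnC. Qed.

Lemma k4_colour_triangle i j : i < 4 -> j < 4 -> i != j ->
  exists2 l, l < 3 &
    [/\ l != i, l != j & uniq [:: k4_colour i j; k4_colour j l; k4_colour l i]].
Proof.
move=> i4 j4 ij.
exists (if (i != 0) && (j != 0) then 0 else if (i != 1) && (j != 1) then 1 else 2).
  by repeat case: ifP.
by move: i4 j4 ij; do 4?[case: i => [|i]] => //; do 4?[case: j => [|j]].
Qed.

Section ThreeColouring.
Variable n : nat.
Hypothesis n_gt2 : 2 < n.

Definition block_start := if odd n then n - 3 else n - 4.

(* The vertices below [block_start] form
   pairs {2i, 2i+1}: a pair edge has colour 1, and any other edge whose lower end u
   is below [block_start] has colour 0 or 2 according to the parity of u. *)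
Definition pair_colour u v :=
  if block_start <= u then k4_colour (u - block_start) (v - block_start)
  else if odd u then 0 else if v == u.+1 then 1 else 2.

Definition tri_colour u v := pair_colour (minn u v) (maxn u v).

Lemma block_start_spec :
  [/\ ~~ odd block_start, block_start + 3 <= n & n <= block_start + 4].
Proof.
rewrite /block_start; case: ifP => on.
  by rewrite oddB ?on //; split; lia.
have n3 : 3 < n by move: n_gt2 on; rewrite leq_eqVlt => /orP [/eqP <-|].
by rewrite oddB ?on //; split; lia.
Qed.

Lemma tri_colourC u v : tri_colour u v = tri_colour v u.
Proof. by rewrite /tri_colour minnC maxnC. Qed.

Lemma tri_colour_lt3 u v : tri_colour u v < 3.
Proof. by rewrite /tri_colour /pair_colour /k4_colour; repeat case: ifP. Qed.

Lemma tri_colour_block u v : block_start <= u -> block_start <= v ->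
  tri_colour u v = k4_colour (u - block_start) (v - block_start).
Proof.
rewrite /tri_colour /pair_colour => bu bv.
by case: (leqP u v) => uv; rewrite ?(minn_idPl uv) ?(maxn_idPr uv) ?(minn_idPr (ltnW uv))
  ?(maxn_idPl (ltnW uv)) ?bu ?bv // k4_colourC.
Qed.

Lemma tri_colour_low u v : u < block_start -> u < v ->
  tri_colour u v = if odd u then 0 else if v == u.+1 then 1 else 2.
Proof.
move=> ub uv; rewrite /tri_colour /pair_colour (minn_idPl (ltnW uv)) (maxn_idPr (ltnW uv)).
by rewrite leqNgt ub.
Qed.

Lemma tri_colour_triangle u v : u < v < n ->
  exists2 w, w < n &
    [/\ w != u, w != v & uniq [:: tri_colour u v; tri_colour v w; tri_colour w u]].
Proof.
case/andP=> uv vn; have [bs_even bs_n n_bs] := block_start_spec.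
have [bu|ub] := leqP block_start u.
  have bv : block_start <= v := leq_trans bu (ltnW uv).
  have [|||l l3 [lu lv luv]] := @k4_colour_triangle (u - block_start) (v - block_start).
  - lia.
  - lia.
  - lia.
  exists (block_start + l); first lia.
  rewrite !tri_colour_block ?leq_addr // addKn.
  by split=> //; [apply: contraNneq lu | apply: contraNneq lv] => <-; rewrite addKn.
have succ_low x : x < block_start -> ~~ odd x -> x.+1 < block_start.
  by move=> xb ex; rewrite ltn_neqAle xb andbT; apply: contraNneq bs_even => <-.
case ou: (odd u).
  case: u ou ub uv => // p /= ep pb pv; have p_low := ltnW pb.
  exists p; first by lia.
  rewrite (tri_colour_low pb pv) tri_colourC !tri_colour_low ?(ltnW pv) //=.
  by rewrite ep (negbTE ep) eqxx (gtn_eqF pv) (ltn_eqF (ltnSn p)) (ltn_eqF (ltnW pv)).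
have [vu1|vu1] := eqVneq v u.+1.
  have u1b := succ_low _ ub (negbT ou).
  exists block_start; first by lia.
  rewrite vu1 [tri_colour block_start u]tri_colourC !tri_colour_low //= ou eqxx.
  by rewrite (gtn_eqF ub) (gtn_eqF u1b).
have u1v : u.+1 < v by rewrite ltn_neqAle eq_sym vu1 uv.
exists u.+1; first exact: leq_ltn_trans uv vn.
rewrite [tri_colour v _]tri_colourC [tri_colour u.+1 u]tri_colourC.
rewrite !tri_colour_low ?(succ_low _ ub) ?ou //= ou (negbTE vu1) eqxx.
by rewrite (gtn_eqF (ltnSn u)) (ltn_eqF u1v).
Qed.

Definition triangle_colouring (u v : 'I_n) : 'I_3 := Ordinal (tri_colour_lt3 u v).

Lemma triangle_colouring_sym : sym_colouring triangle_colouring.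
Proof. by move=> u v; apply: val_inj; rewrite /= tri_colourC. Qed.

Lemma edge_on_rainbow_triangle (u v : 'I_n) : u != v ->
  exists s, [&& rainbow_cycle triangle_colouring s, u \in s & v \in s].
Proof.
move=> uv; wlog ltuv : u v uv / u < v.
  move=> hw; case: (ltngtP u v) => [|vu|e]; first exact: hw.
    have [|s /and3P [rs vs us]] := hw v u _ vu; first by rewrite eq_sym.
    by exists s; rewrite rs us vs.
  by move: uv; rewrite (val_inj e) eqxx.
have [w wn [wu wv uniq_c]] := tri_colour_triangle (introT andP (conj ltuv (ltn_ord v))).
have uniq_vs : uniq [:: u; v; Ordinal wn].
  by rewrite /= !inE -!val_eqE /= negb_or neq_ltn ltuv eq_sym wu eq_sym wv.
have uniq_cs : uniq (cycle_colours triangle_colouring [:: u; v; Ordinal wn]).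
  by rewrite -(map_inj_uniq val_inj).
exists [:: u; v; Ordinal wn].
by rewrite /rainbow_cycle /is_cycle uniq_vs uniq_cs !inE !eqxx orbT.
Qed.

Lemma crx_colourable_small k : 0 < k <= 2 -> crx_colourable n k 3.
Proof.
move=> k12; exists triangle_colouring; split=> [|S cS]; first exact: triangle_colouring_sym.
have [u [v [uv Suv]]] : exists u v, u != v /\ S \subset [set u; v].
  case: k k12 cS => [|[|[|]]] // _ cS.
    have /cards1P [x ->] : #|S| == 1 by rewrite cS.
    have : 0 < #|predC1 x| by rewrite cardC1 card_ord -ltnS prednK // ltnW // ltnW.
    case/card_gt0P => y; rewrite !inE => yx.
    by exists x, y; rewrite eq_sym yx; split => //; apply/subsetP => z; rewrite !inE => ->.
  have /cards2P [x [y [xy ->]]] : #|S| == 2 by rewrite cS.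
  by exists x, y.
have [s /and3P [rs us vs]] := edge_on_rainbow_triangle uv.
exists s; rewrite rs; apply: subset_trans Suv _.
by apply/subsetP => z; rewrite !inE => /orP [] /eqP ->.
Qed.

End ThreeColouring.

Lemma crx_Kn_eq_small n k : 2 < n -> 0 < k <= 2 -> crx_Kn_eq k n 3.
Proof.
move=> n2 k12; split=> [|m m3 col]; first exact: crx_colourable_small.
have := crx_colourable_ge3 col; case/andP: k12 => -> k2.
by rewrite (leq_trans k2 (ltnW n2)) => /(_ isT); rewrite ltnNge -ltnS m3.
Qed.

(** * Digit colourings *)

Lemma eqmod_dvd m d x y : d %| m -> x = y %[mod m] -> x = y %[mod d].
Proof. by move=> dm xy; rewrite -(modn_dvdm x dm) xy modn_dvdm. Qed.

Lemma eqmod_mul_cancel P Q z w0 : z = P * w0 %[mod P * Q] ->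
  exists2 w, z = P * w & w = w0 %[mod Q].
Proof.
move=> zw; exists (z %/ (P * Q) * Q + w0 %% Q); last by rewrite modnMDl modn_mod.
by rewrite {1}(divn_eq z (P * Q)) zw -muln_modr mulnDr mulnCA.
Qed.

Lemma modn_addNK q b n : 0 < q -> ((b + n * q.-1) %% q + n) %% q = b %% q.
Proof. by move=> q0; rewrite modnDml -addnA -mulnSr prednK // addnC modnMDl. Qed.

Lemma leq_mul_split A C K1 K2 n : A * C <= n -> K1 * K2 <= n ->
  A * K1 <= n \/ C * K2 <= n.
Proof.
move=> ACn Kn; have [|AK1] := leqP (A * K1) n; [by left | right].
have CK1 : C < K1.
  by rewrite -(ltn_pmul2l (_ : 0 < A)) ?(leq_ltn_trans ACn) //; case: A AK1 {ACn}.
by apply: leq_trans Kn; rewrite leq_mul2r ltnW ?orbT.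
Qed.

Lemma valuation_decomp B x : 1 < B -> 0 < x -> exists t d, x = B ^ t * d /\ ~~ (B %| d).
Proof.
move=> B1; elim/ltn_ind: x => x IH x0.
have [Bx|nBx] := boolP (B %| x); last by exists 0, x; rewrite mul1n.
have B0 : 0 < B := ltnW B1.
have [t [d [xd Bd]]] : exists t d, x %/ B = B ^ t * d /\ ~~ (B %| d).
  by apply: IH; [rewrite ltn_Pdiv | rewrite divn_gt0 // dvdn_leq].
by exists t.+1, d; rewrite expnSr mulnAC -xd divnK.
Qed.

Fixpoint strip_rec (B fuel z : nat) : nat :=
  if fuel is fuel'.+1 then
    if (0 < z) && (B %| z) then strip_rec B fuel' (z %/ B) else z
  else z.

Definition strip B z := strip_rec B z z.

(* The base-B digit of z just above its lowest nonzero digit ([strip B z] is z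
   with all factors B removed). *)
Definition next_digit B z := (strip B z %/ B) %% B.

Lemma strip_rec_pmul B f t y : 1 < B -> ~~ (B %| y) -> t < f ->
  strip_rec B f (B ^ t * y) = y.
Proof.
move=> B1 By; have y0 : 0 < y by case: y By; rewrite ?dvdn0.
elim: t f => [|t IH] [|f] //= tf; first by rewrite mul1n y0 (negbTE By).
rewrite expnS -mulnA muln_gt0 (ltnW B1) /= muln_gt0 expn_gt0 (ltnW B1) y0.
by rewrite dvdn_mulr //= mulKn ?IH // ltnW.
Qed.

Lemma next_digit_pmul B t y : 1 < B -> ~~ (B %| y) ->
  next_digit B (B ^ t * y) = (y %/ B) %% B.
Proof.
move=> B1 By; rewrite /next_digit /strip strip_rec_pmul //.
have y0 : 0 < y by case: y By; rewrite ?dvdn0.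
exact: leq_trans (ltn_expl t B1) (leq_pmulr _ y0).
Qed.

Lemma next_digit_eqmod B z r : 1 < B -> ~~ (B %| r) -> z = r %[mod B * B] ->
  next_digit B z = (r %/ B) %% B.
Proof.
move=> B1 Br zr.
have zrB : z = r %[mod B] by apply: eqmod_dvd zr; apply: dvdn_mull.
have Bz : ~~ (B %| z) by rewrite /dvdn zrB.
by rewrite -[z]mul1n -(expn0 B) next_digit_pmul // !modn_divl zr.
Qed.

Lemma next_digit_scaled B t s w r a d : 1 < B -> 0 < r < B -> a < B -> ~~ (B %| d) ->
  w = r + B * a %[mod B * B] ->
  next_digit B (B ^ (t + s.+1) * w) = a /\
  next_digit B (B ^ (t + s.+1) * w + B ^ t * d) = (B ^ s * r + d %/ B) %% B.
Proof.
move=> B1 /andP [r0 rB] aB Bd wr; have B0 := ltnW B1.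
have wrB : w = r %[mod B].
  by rewrite (eqmod_dvd (dvdn_mull B (dvdnn B)) wr) addnC mulnC modnMDl.
have Bw : ~~ (B %| w) by rewrite /dvdn wrB modn_small // -lt0n.
split.
  have lt_ra : r + B * a < B * B.
    by rewrite (leq_trans (_ : _ < B + B * a)) ?ltn_add2r // -mulnS leq_mul2l aB orbT.
  rewrite next_digit_pmul // modn_divl wr modn_small //.
  by rewrite addnC mulnC divnMDl // divn_small // addn0.
have -> : B ^ (t + s.+1) * w + B ^ t * d = B ^ t * (B ^ s * w * B + d).
  by rewrite expnD expnSr; ring.
rewrite next_digit_pmul ?dvdn_addr ?dvdn_mull // divnMDl //.
by rewrite -modnDml -modnMmr wrB modnMmr modnDml.
Qed.

(* Take z = B^(t+1) w with w = r + B a (mod B^2), which gives the digits a and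
   (r + d/B) mod B; if the required r is 0, go one power of B higher with r = 1. *)
Lemma next_digit_pattern B t d a b : 1 < B -> ~~ (B %| d) -> a < B -> b < B ->
  exists R, forall z, z = R %[mod B ^ (t + 4)] ->
    next_digit B z = a /\ next_digit B (z + B ^ t * d) = b.
Proof.
move=> B1 Bd aB bB; have B0 := ltnW B1.
have [s [r [s1 r0B rb]]] :
    exists s r, [/\ s <= 1, 0 < r < B & (B ^ s * r + d %/ B) %% B = b].
  pose r := (b + d %/ B * B.-1) %% B.
  have rb : (r + d %/ B) %% B = b by rewrite modn_addNK // modn_small.
  have [r0|r_gt0] := posnP r; last by exists 0, r; rewrite mul1n r_gt0 ltn_mod.
  by exists 1, 1; rewrite B1 muln1 -modnDml modnn add0n -rb r0.
exists (B ^ (t + s.+1) * (r + B * a)) => z zR.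
have e : t + s.+1 + (3 - s) = t + 4 by rewrite -addnA addSn subnKC ?(leq_trans s1).
have [|w -> wr] := @eqmod_mul_cancel (B ^ (t + s.+1)) (B ^ (3 - s)) z (r + B * a).
  by rewrite -expnD e.
have BB : B * B %| B ^ (3 - s) by rewrite mulnn dvdn_exp2l // (leq_sub2l 3 s1).
have wr2 : w = r + B * a %[mod B * B] := eqmod_dvd BB wr.
by rewrite -rb; apply: next_digit_scaled.
Qed.

(* Modulo B'^2, z is fixed to r and z + B^t d to r + B^t d, both prime to B', so
   their base-B' digits are known (the first one is 0); the base-B digits are then
   chosen by [next_digit_pattern] to compensate. *)
Lemma digit_sum_pattern q B B' t d a b : 1 < B -> q <= B -> 2 < B' -> coprime B B' ->
  ~~ (B %| d) -> a < q -> b < q ->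
  exists R, forall z, z = R %[mod B ^ (t + 4) * (B' * B')] ->
    (next_digit B z + next_digit B' z) %% q = a /\
    (next_digit B (z + B ^ t * d) + next_digit B' (z + B ^ t * d)) %% q = b.
Proof.
move=> B1 qB B'2 coBB' Bd aq bq; have q0 : 0 < q := leq_ltn_trans (leq0n a) aq.
have B'1 : 1 < B' := ltnW B'2.
set δ := B ^ t * d.
pose r := if B' %| δ.+1 then 2 else 1.
have r0 : 0 < r by rewrite /r; case: ifP.
have rB' : r < B' by rewrite /r; case: ifP.
have B'r : ~~ (B' %| r) by rewrite /dvdn modn_small // -lt0n.
have B'rδ : ~~ (B' %| r + δ).
  rewrite /r; case: ifPn => [h|]; last by rewrite add1n.
  by rewrite add2n -addn1 dvdn_addr // dvdn1 gtn_eqF.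
pose n2 := ((r + δ) %/ B') %% B'.
have [R1 HR1] := @next_digit_pattern B t d a ((b + n2 * q.-1) %% q) B1 Bd
  (leq_trans aq qB) (leq_trans (ltn_pmod _ q0) qB).
have coP : coprime (B ^ (t + 4)) (B' * B') by rewrite coprimeXl // coprimeMr coBB'.
exists (chinese (B ^ (t + 4)) (B' * B') R1 r) => z zR.
have z1 : z = R1 %[mod B ^ (t + 4)].
  by rewrite (eqmod_dvd (dvdn_mulr _ (dvdnn _)) zR) chinese_modl.
have z2 : z = r %[mod B' * B'].
  by rewrite (eqmod_dvd (dvdn_mull _ (dvdnn _)) zR) chinese_modr.
have z2δ : z + δ = r + δ %[mod B' * B'] by rewrite -modnDml z2 modnDml.
have [-> ->] := HR1 z z1.
rewrite (next_digit_eqmod B'1 B'r z2) (next_digit_eqmod B'1 B'rδ z2δ).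
by rewrite divn_small // mod0n addn0 (modn_small aq) -/n2 modn_addNK // (modn_small bq).
Qed.

Definition digit_colour q z := (next_digit q z + next_digit q.+1 z) %% q.

Lemma digit_colour_lt q z : 0 < q -> digit_colour q z < q.
Proof. exact: ltn_pmod. Qed.

Definition ext_bound q M := q ^ 4 * (q.+1 * q.+1) * M.+1 * (q.+1 ^ 4 * (q * q) * M.+1).

(* Since q^t1 (q+1)^t2 divides δ < n, one of the two bases B has a power B^t in δ
   so small that the period B^(t+4) B'^2 of [digit_sum_pattern] fits M + 1 times
   into n. *)
Lemma digit_colour_pattern q M n δ a b : 2 < q -> 0 < δ < n -> ext_bound q M <= n ->
  a < q -> b < q ->
  exists R P, [/\ 0 < P, P * M.+1 <= n &
    forall z, z = R %[mod P] -> digit_colour q z = a /\ digit_colour q (z + δ) = b].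
Proof.
move=> q2 /andP [δ0 δn] hn aq bq; have q1 : 1 < q := ltnW q2.
have [t1 [d1 [δ1 qd1]]] := valuation_decomp q1 δ0.
have [t2 [d2 [δ2 qd2]]] := valuation_decomp (leqW q1) δ0.
have hAC : q ^ t1 * q.+1 ^ t2 <= n.
  apply: leq_trans (ltnW δn); apply: (dvdn_leq δ0).
  by rewrite Gauss_dvd ?coprimeXl ?coprimeXr ?coprimenS // {1}δ1 δ2 !dvdn_mulr.
have [h|h] := leq_mul_split hAC hn.
- have [R HR] := @digit_sum_pattern q q q.+1 t1 d1 a b q1 (leqnn q) (leqW q2)
    (coprimenS q) qd1 aq bq.
  exists R, (q ^ (t1 + 4) * (q.+1 * q.+1)); split.
  + by rewrite !muln_gt0 !expn_gt0 (ltnW q1).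
  + by apply: leq_trans h; rewrite expnD; apply: eq_leq; ring.
  + by rewrite δ1.
- have [R HR] := @digit_sum_pattern q q.+1 q t2 d2 a b (leqW q1) (leqnSn q) q2
    (coprimeSn q) qd2 aq bq.
  exists R, (q.+1 ^ (t2 + 4) * (q * q)); split.
  + by rewrite !muln_gt0 !expn_gt0 (ltnW q1).
  + by apply: leq_trans h; rewrite expnD; apply: eq_leq; ring.
  + by rewrite δ2 /digit_colour => z /HR; rewrite ![next_digit q _ + _]addnC.
Qed.

Definition digit_colouring q (q0 : 0 < q) n (u v : 'I_n) : 'I_q :=
  Ordinal (digit_colour_lt (u + v) q0).

Lemma digit_colouring_sym q (q0 : 0 < q) n : sym_colouring (@digit_colouring q q0 n).
Proof. by move=> u v; apply: val_inj; rewrite /= addnC. Qed.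

Definition extension_property n m (c : 'I_n -> 'I_n -> 'I_m) M :=
  forall a b, a != b -> forall (α β : 'I_m) (F : seq 'I_n), size F <= M ->
    exists2 x, x \notin F & c a x = α /\ c b x = β.

Lemma digit_colouring_extension q (q0 : 0 < q) M n : 2 < q -> ext_bound q M <= n ->
  extension_property (@digit_colouring q q0 n) M.
Proof.
move=> q2 hn.
suff ext_lt (a b : 'I_n) : a < b -> forall (α β : 'I_q) (F : seq 'I_n), size F <= M ->
    exists2 x, x \notin F & digit_colouring q0 a x = α /\ digit_colouring q0 b x = β.
  move=> a b; rewrite neq_ltn => /orP [ab|ba] α β F sF; first exact: ext_lt.
  by have [x xF [hb ha]] := ext_lt b a ba β α F sF; exists x.
move=> ab α β F sF.
have δn : 0 < b - a < n by rewrite subn_gt0 ab (leq_ltn_trans (leq_subr _ _)).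
have [R [P [P0 PMn HP]]] := digit_colour_pattern q2 δn hn (ltn_ord α) (ltn_ord β).
pose x0 := (R + a * P.-1) %% P.
have x0a : x0 + a = R %[mod P] by rewrite modn_addNK.
have lt_x0 i : i < M.+1 -> x0 + P * i < n.
  move=> iM; apply: leq_trans PMn.
  by rewrite mulnS -addSn leq_add ?ltn_mod // leq_mul2l -ltnS iM orbT.
pose g (i : 'I_M.+1) : 'I_n := Ordinal (lt_x0 i (ltn_ord i)).
have g_inj : injective g.
  move=> i j /(congr1 val) /= /eqP; rewrite eqn_add2l eqn_mul2l gtn_eqF //=.
  by move/eqP/val_inj.
have /subsetPn [_ /imsetP [i _ ->] giF] : ~~ (g @: setT \subset [set x in F]).
  apply: contraTN sF => /subset_leq_card; rewrite card_imset // cardsT card_ord -ltnNge.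
  by move/leq_trans; apply; rewrite cardsE card_size.
exists (g i); first by rewrite inE in giF.
have [|ga gb] := HP (a + (x0 + P * i)).
  by rewrite (_ : a + _ = i * P + (x0 + a)) ?modnMDl //; ring.
have eb : b + (x0 + P * i) = a + (x0 + P * i) + (b - a).
  by rewrite addnAC subnKC ?(ltnW ab) // addnC.
by split; apply: val_inj; rewrite /= ?eb.
Qed.

(** * Rainbow cycles from the extension property *)

Section RainbowPaths.
Variables (n m : nat) (c : 'I_n -> 'I_n -> 'I_m).
Hypothesis c_sym : sym_colouring c.

Fixpoint path_colours (x : 'I_n) (p : seq 'I_n) : seq 'I_m :=
  if p is y :: p' then c x y :: path_colours y p' else [::].

Lemma size_path_colours x p : size (path_colours x p) = size p.
Proof. by elim: p x => //= y p IH x; rewrite IH. Qed.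

Lemma cycle_colours_cons x p :
  cycle_colours c (x :: p) = rcons (path_colours x p) (c (last x p) x).
Proof.
rewrite /cycle_colours rot1_cons; move: {2 5}x.
by elim: p x => //= y p IH x z; rewrite IH.
Qed.

Variable M : nat.
Hypothesis c_ext : extension_property c M.

Lemma extension_path (ss : seq 'I_n) (x : 'I_n) (F : seq 'I_n) (cs : seq 'I_m) :
  uniq (x :: ss) -> [disjoint x :: ss & F] -> size cs = (size ss).*2 ->
  size F + (size ss).*2 < M ->
  exists p, [/\ uniq (x :: p), [disjoint x :: p & F], {subset ss <= p},
                last x p = last x ss & path_colours x p = cs].
Proof.
elim: ss x F cs => [|s1 ss IH] x F cs.
  by case: cs => // _ xF _ _; exists [::].
rewrite cons_uniq disjoint_cons => /andP [xs us] /andP [xF sF].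
case: cs => [|α [|β cs]] //; rewrite [size (s1 :: ss)]/= doubleS => -[scs] sM.
have xs1 : x != s1 by apply: contraNneq xs => ->; apply: mem_head.
have [|y yF [xy s1y]] := @c_ext x s1 xs1 α β (F ++ x :: s1 :: ss).
  by rewrite size_cat [size (_ :: _)]/= -ltnS; apply: leq_trans sM; lia.
move: yF; rewrite mem_cat !inE !negb_or => /and4P [yF yx ys1 yss].
have [||p [up pF sp lp pc]] := IH s1 (x :: y :: F) cs us _ scs.
- by rewrite disjoint_sym !disjoint_cons xs inE negb_or ys1 yss disjoint_sym sF.
- by rewrite [size (_ :: _)]/= !addSn -2!addnS.
move: pF; rewrite disjoint_sym !disjoint_cons => /and3P [xp yp Fp].
exists (y :: s1 :: p); split.
- by rewrite (cons_uniq x) (cons_uniq y) up inE negb_or eq_sym yx xp yp.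
- by rewrite (disjoint_cons x) (disjoint_cons y) xF yF disjoint_sym Fp.
- by move=> v; rewrite !inE => /orP [->|/sp ->]; rewrite !orbT.
- by rewrite /= lp.
- by rewrite /= xy c_sym s1y pc.
Qed.

End RainbowPaths.

(* Between consecutive vertices of S insert a fresh vertex realising two new
   colours; the closing edge gets the one colour left. *)
Lemma rainbow_colouring_of_extension n m k (c : 'I_n -> 'I_n -> 'I_m) :
  sym_colouring c -> 1 < k -> m.+1 = k.*2 -> extension_property c k.*2 ->
  k_rainbow_cycle_colouring k c.
Proof.
move=> c_sym k1 mk c_ext S cS.
case def_ss: (enum S) => [|x rest].
  by move: cS k1; rewrite cardE def_ss => <-.
have size_rest : (size rest).+1 = k by rewrite -cS cardE def_ss.
have m_rest : m = (size rest).*2.+1 by move: mk; rewrite -size_rest doubleS => -[].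
pose γ := c (last x rest) x.
pose cs := enum (predC1 γ).
have size_cs : size cs = (size rest).*2 by rewrite -cardE cardC1 card_ord m_rest.
have [|||p [up _ sp lp pc]] :=
  @extension_path n m c c_sym k.*2 c_ext rest x [::] cs _ _ size_cs.
- by rewrite -def_ss enum_uniq.
- by rewrite disjoint_has; apply/hasPn.
- by rewrite -size_rest doubleS.
exists (x :: p); apply/andP; split; last first.
  apply/subsetP => v; rewrite -mem_enum def_ss !inE => /orP [->|/sp ->] //.
  by rewrite orbT.
rewrite /rainbow_cycle /is_cycle up cycle_colours_cons pc lp /=.
rewrite -(size_path_colours c x p) pc size_cs rcons_uniq enum_uniq mem_enum /=.
rewrite !inE negbK eqxx !andbT.
by move: k1; rewrite -size_rest; case: (size rest) => [|[]].
Qed.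

Lemma crx_colourable_digit k n : 1 < k -> ext_bound (2 * k - 1) k.*2 <= n ->
  crx_colourable n k (2 * k - 1).
Proof.
move=> k1 hn; have q0 : 0 < 2 * k - 1 by lia.
exists (@digit_colouring _ q0 n); split; first exact: digit_colouring_sym.
apply: rainbow_colouring_of_extension => //; [exact: digit_colouring_sym | lia |].
by apply: digit_colouring_extension hn; lia.
Qed.

Lemma crx_Kn_eq_large k n : 1 < k -> ext_bound (2 * k - 1) k.*2 <= n ->
  ramsey_bound k.*2 k <= n -> crx_Kn_eq k n (2 * k - 1).
Proof.
move=> k1 h_ext h_ram; split=> [|m lt_m col]; first exact: crx_colourable_digit.
have h_m : ramsey_bound m k <= n by apply: leq_trans h_ram; apply: ramsey_bound_mono; lia.
by have := crx_colourable_lower h_m col; lia.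
Qed.

Theorem theorem3p2 :
  (forall n : nat, 3 <= n -> crx_Kn_eq 1 n 3 /\ crx_Kn_eq 2 n 3) /\
  (forall k : nat, 3 <= k ->
     exists N : nat, forall n : nat, N <= n -> crx_Kn_eq k n (2 * k - 1)).
Proof.
split=> [n n3 | k k3]; first by split; apply: crx_Kn_eq_small.
exists (maxn (ext_bound (2 * k - 1) k.*2) (ramsey_bound k.*2 k)) => n.
by rewrite geq_max => /andP [h_ext h_ram]; apply: crx_Kn_eq_large; rewrite // ltnW.
Qed.
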